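(* For each $\lambda\in K^*$, the algebras $T(\lambda^{-2})$ and $\Sigma(\lambda)$ are isomorphic.
   Context: $K$ is an algebraically closed field; paths composed left to right. For a triangulation quiver $(Q,f)$ (finite connected quiver, $\ge2$ vertices, exactly two arrows start and two end at each vertex, $f$ a permutation of arrows with $s(f(\alpha))=t(\alpha)$, $f^3=\mathrm{id}$), $\bar\alpha$ is the other arrow with source $s(\alpha)$, $g(\alpha)=\overline{f(\alpha)}$, $n_\alpha$ the $g$-orbit length; with weights $m_\alpha$ and parameters $c_\alpha\in K^*$ constant on $g$-orbits, $A_\alpha=\alpha g(\alpha)\cdots g^{m_\alpha n_\alpha-2}(\alpha)$; $\alpha$ virtual if $m_\alpha n_\alpha=2$. The weighted surface algebra is $KQ/I$, $I$ generated by $\alpha f(\alpha)-c_{\bar\alpha}A_{\bar\alpha}$ (all $\alpha$), $\alpha f(\alpha)g(f(\alpha))$ ($f^2(\alpha)$ not virtual), $\alpha g(\alpha)f(g(\alpha))$ ($f(\alpha)$ not virtual). $T(\mu)$ ($\mu\in K^*$): vertices $1,2,3$; arrows $\alpha_1:1\to2,\alpha_2:2\to3,\alpha_3:3\to1,\beta_1:2\to1,\beta_2:3\to2,\beta_3:1\to3$; $f=(\alpha_1\,\alpha_2\,\alpha_3)(\beta_1\,\beta_3\,\beta_2)$; weights $2,2,1$ and parameters $\mu,1,1$ on the $g$-orbits $(\alpha_1\,\beta_1),(\alpha_2\,\beta_2),(\alpha_3\,\beta_3)$. $\Sigma(\lambda)$: vertices $1,2,3$; arrows $\alpha:1\to1$,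 $\beta:1\to2$, $\gamma:2\to1$, $\sigma:2\to3$, $\delta:3\to2$, $\eta:3\to3$; $f=(\alpha\,\beta\,\gamma)(\eta\,\delta\,\sigma)$ (so $g$-orbits $(\alpha),(\beta\,\sigma\,\delta\,\gamma),(\eta)$); weights $2,1,2$ and parameters $1,\lambda,1$ on these orbits respectively. *)

From HB Require Import structures.
From mathcomp Require Import all_boot all_order all_algebra.
From mathcomp Require Import monalg.
Set Implicit Arguments. Unset Strict Implicit. Unset Printing Implicit Defensive.
Import Order.TTheory GRing.Theory Num.Theory.
Local Open Scope ring_scope.

Inductive gen_ideal (R : pzRingType) (P : R -> Prop) : R -> Prop :=
| gi_gen r : P r -> gen_ideal P r
| gi_0 : gen_ideal P 0
| gi_add x y : gen_ideal P x -> gen_ideal P y -> gen_ideal P (x + y)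
| gi_mull a x : gen_ideal P x -> gen_ideal P (a * x)
| gi_mulr x a : gen_ideal P x -> gen_ideal P (x * a).

Definition FreeAlg (K : fieldType) (V A : finType) :=
  {malg K[{fmonom (V + A)%type}]}.

Section PathAlgebra.
Variables (K : fieldType) (V A : finType) (s t : A -> V).
Local Notation F := (FreeAlg K V A).

Definition vtx (v : V) : F := << fmu (inl v : (V + A)%type) >>.
Definition arr (a : A) : F := << fmu (inr a : (V + A)%type) >>.
(* the path a_1 a_2 ... a_k (composed left to right) *)
Definition pth (w : seq A) : F := \prod_(b <- w) arr b.

(* relations presenting the path algebra KQ as a quotient of K<V + A>:
   e_v e_w = delta_{vw} e_v, sum_v e_v = 1, e_{s(a)} a = a = a e_{t(a)} *)
Definition quiver_rel (x : F) : Prop :=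
  (exists v w, x = vtx v * vtx w - (v == w)%:R * vtx v)
  \/ x = \sum_v vtx v - 1
  \/ (exists a, x = vtx (s a) * arr a - arr a)
  \/ (exists a, x = arr a * vtx (t a) - arr a).
End PathAlgebra.

Section WSA.
Variables (K : fieldType) (V A : finType) (s t : A -> V) (f : A -> A)
          (m : A -> nat) (c : A -> K).
Local Notation F := (FreeAlg K V A).

Definition bar (a : A) : A := odflt a [pick b | (s b == s a) && (b != a)].
Definition gperm (a : A) : A := bar (f a).
Definition norb (a : A) : nat := order gperm a.
Definition Apath (a : A) : F :=
  pth K V [seq iter i gperm a | i <- iota 0 (m a * norb a - 1)].
Definition virtual (a : A) : bool := m a * norb a == 2.

Definition wsa_rel (x : F) : Prop :=
  quiver_rel s t x
  \/ (exists a, x = arr K V a * arr K V (f a) - c (bar a) *: Apath (bar a))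
  \/ (exists a, ~~ virtual (f (f a)) /\
        x = arr K V a * arr K V (f a) * arr K V (gperm (f a)))
  \/ (exists a, ~~ virtual (f a) /\
        x = arr K V a * arr K V (gperm a) * arr K V (f (gperm a))).

(* the ideal of KQ + path-algebra relations; KQ/I = FreeAlg / wsa_ideal *)
Definition wsa_ideal : F -> Prop := gen_ideal wsa_rel.
End WSA.

(* ---------- isomorphism of quotient algebras F1/J1 ~ F2/J2, expressed on
   representatives: algebra maps in both directions that respect the ideals
   and induce mutually inverse maps on the quotients. *)
Definition quot_alg_iso (K : fieldType) (F1 F2 : lalgType K)
    (J1 : F1 -> Prop) (J2 : F2 -> Prop) : Prop :=
  exists (phi : {lrmorphism F1 -> F2}) (psi : {lrmorphism F2 -> F1}),
    [/\ forall x, J1 x -> J2 (phi x),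
        forall y, J2 y -> J1 (psi y),
        forall x, J1 (psi (phi x) - x)
      & forall y, J2 (phi (psi y) - y)].

(* ---------- the two concrete algebras; vertices 1,2,3 are 0,1,2 in 'I_3 *)
Definition tab3 (l : seq nat) (i : 'I_6) : 'I_3 := inord (nth 0%N l i).
Definition tab6 (l : seq nat) (i : 'I_6) : 'I_6 := inord (nth 0%N l i).
Definition tabn (l : seq nat) (i : 'I_6) : nat := nth 0%N l i.
Definition tabK (K : fieldType) (l : seq K) (i : 'I_6) : K := nth 1 l i.

(* T(mu): arrows 0..5 = alpha1 alpha2 alpha3 beta1 beta2 beta3 *)
Definition T_s := tab3 [:: 0; 1; 2; 1; 2; 0]%N.
Definition T_t := tab3 [:: 1; 2; 0; 0; 1; 2]%N.
Definition T_f := tab6 [:: 1; 2; 0; 5; 3; 4]%N.   (* (a1 a2 a3)(b1 b3 b2) *)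
Definition T_m := tabn [:: 2; 2; 1; 2; 2; 1]%N.   (* orbits (a1 b1),(a2 b2),(a3 b3) *)
Definition T_c (K : fieldType) (mu : K) := tabK [:: mu; 1; 1; mu; 1; 1].
Definition T_ideal (K : fieldType) (mu : K) :=
  wsa_ideal T_s T_t T_f T_m (T_c mu).

(* Sigma(lambda): arrows 0..5 = alpha beta gamma sigma delta eta *)
Definition S_s := tab3 [:: 0; 0; 1; 1; 2; 2]%N.
Definition S_t := tab3 [:: 0; 1; 0; 2; 1; 2]%N.
Definition S_f := tab6 [:: 1; 2; 0; 5; 3; 4]%N.   (* (alpha beta gamma)(eta delta sigma) *)
Definition S_m := tabn [:: 2; 1; 1; 1; 1; 2]%N.   (* orbits (alpha),(beta sigma delta gamma),(eta) *)
Definition S_c (K : fieldType) (lam : K) := tabK [:: 1; lam; lam; lam; lam; 1].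
Definition S_ideal (K : fieldType) (lam : K) :=
  wsa_ideal S_s S_t S_f S_m (S_c lam).

(* The
   substitution alpha1 -> beta, alpha2 -> lam^-1 sigma, alpha3 -> delta gamma,
   beta1 -> gamma, beta2 -> delta, beta3 -> lam^-1 beta sigma sends every
   defining relation of T(lam^-2) into the ideal of Sigma(lam), and
   alpha -> alpha1 beta1, beta -> alpha1, gamma -> beta1, sigma -> lam alpha2,
   delta -> beta2, eta -> lam beta2 alpha2 does the converse.  On arrows the two
   composites are the identity up to beta2 beta1 = alpha3, alpha1 alpha2 = beta3
   in T and beta gamma = alpha, delta sigma = eta in Sigma, so they induce
   mutually inverse isomorphisms. *)

From Pilot Require Import Defs.
From HB Require Import structures.
From mathcomp Require Import all_boot all_order all_algebra.
From mathcomp Require Import monalg.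
From Stdlib Require Import Setoid Morphisms FunctionalExtensionality.
Set Implicit Arguments. Unset Strict Implicit. Unset Printing Implicit Defensive.
Import GRing.Theory.
Local Open Scope ring_scope.

Section FreeAlgebra.
Variables (K : fieldType) (I : choiceType).
Local Notation F := {malg K[{fmonom I}]}.

Lemma free_scalerAr (k : K) (x y : F) : k *: (x * y) = x * (k *: y).
Proof.
rewrite -!mul_malgC [x]monalgE !mulr_suml mulr_sumr; apply: eq_bigr => m _.
rewrite [RHS]mulrA.
have -> : << x@_m *g m >> * k%:MP = k%:MP * << x@_m *g m >> :> F.
  by rewrite !malgM_def !fgmulUU mulm1 mul1m mulrC.
by rewrite mulrA.
Qed.

Lemma free_alg_ind (Q : F -> Prop) :
  Q 1 -> (forall i, Q << fmu i >>) ->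
  (forall x y, Q x -> Q y -> Q (x + y)) -> (forall k x, Q x -> Q (k *: x)) ->
  (forall x y, Q x -> Q y -> Q (x * y)) -> forall x, Q x.
Proof.
move=> Q1 Qgen QD QZ QM x; rewrite [x]monalgE.
elim/big_rec: _ => [|m y _ Qy]; first by rewrite -(scale0r 1); apply: QZ.
apply: QD Qy.
have -> : << x@_m *g m >> = x@_m *: (<< m >> : F).
  by rewrite -mul_malgC malgM_def fgmulUU mulr1 mul1m.
apply: QZ; case: m => w; elim: w => [|i w IHw].
  by rewrite (_ : FMonom [::] = mone) ?mpolyC1E //; apply: val_inj; rewrite /= fm1.
rewrite (_ : FMonom (i :: w) = mmul (fmu i) (FMonom w)); last first.
  by apply: val_inj; rewrite /= fmM fmU.
have -> : << mmul (fmu i) (FMonom w) >> = << fmu i >> * << FMonom w >> :> F.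
  by rewrite malgM_def fgmulUU mulr1.
exact: QM.
Qed.

Variable R : lalgType K.
Hypothesis R_scalerAr : forall k (x y : R), k *: (x * y) = x * (k *: y).
Variable gen : I -> R.

Definition free_monom_eval (m : {fmonom I}) : R := \prod_(i <- fmonom_val m) gen i.

Lemma free_monom_eval_is_mmorphism : mmorphism free_monom_eval.
Proof. by split=> [m1 m2|]; rewrite /free_monom_eval ?fmM ?big_cat // fm1 big_nil. Qed.

HB.instance Definition _ :=
  isMultiplicative.Build _ _ free_monom_eval free_monom_eval_is_mmorphism.

Definition free_map : F -> R := mmap (in_alg R) free_monom_eval.

HB.instance Definition _ := GRing.Additive.on free_map.

Lemma free_map_is_monoid_morphism : monoid_morphism free_map.
Proof.
have [c m m'|evalM eval1] :=
  commr_mmap_is_multiplicative (f := in_alg R) (h := free_monom_eval).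
  by rewrite /GRing.comm /= mulr_algl -R_scalerAr mulr1.
by split; [apply: eval1 | apply: evalM].
Qed.

HB.instance Definition _ :=
  GRing.isMonoidMorphism.Build F R free_map free_map_is_monoid_morphism.

Lemma free_map_is_scalable : scalable free_map.
Proof. by move=> k x; rewrite /free_map mmapZ /= mulr_algl. Qed.

HB.instance Definition _ :=
  GRing.isScalable.Build K F R *:%R free_map free_map_is_scalable.

Definition free_eval : {lrmorphism F -> R} := free_map.

Lemma free_eval_gen i : free_eval << fmu i >> = gen i.
Proof. by rewrite /= /free_map mmapU /= scale1r mul1r /free_monom_eval fmU big_seq1. Qed.
End FreeAlgebra.

Section Congruence.
Variables (K : fieldType) (R : lalgType K) (P : R -> Prop).
Local Notation J := (gen_ideal P).

Lemma gen_idealZ k x : J x -> J (k *: x).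
Proof. by move=> Jx; rewrite -mulr_algl; apply: gi_mull. Qed.

Definition eqmod (x y : R) : Prop := J (x - y).

Lemma eqmod0 x : eqmod x 0 <-> J x.
Proof. by rewrite /eqmod subr0. Qed.

Lemma eqmod_refl x : eqmod x x.
Proof. by rewrite /eqmod subrr; apply: gi_0. Qed.

Lemma eqmodZ k x y : eqmod x y -> eqmod (k *: x) (k *: y).
Proof. by rewrite /eqmod -scalerBr; apply: gen_idealZ. Qed.

Lemma eqmod_sym x y : eqmod x y -> eqmod y x.
Proof. by move=> Jxy; rewrite /eqmod -opprB -scaleN1r; apply: gen_idealZ. Qed.

Lemma eqmod_trans x y z : eqmod x y -> eqmod y z -> eqmod x z.
Proof. by move=> Jxy Jyz; rewrite /eqmod -(subrKA y); apply: gi_add. Qed.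

Lemma eqmodD x x' y y' : eqmod x x' -> eqmod y y' -> eqmod (x + y) (x' + y').
Proof. by rewrite /eqmod opprD addrACA; apply: gi_add. Qed.

Lemma eqmodM x x' y y' : eqmod x x' -> eqmod y y' -> eqmod (x * y) (x' * y').
Proof.
move=> Jx Jy; rewrite /eqmod -(subrKA (x' * y)) -mulrBl -mulrBr.
by apply: gi_add; [apply: gi_mulr | apply: gi_mull].
Qed.

#[global] Instance eqmod_equiv : Equivalence eqmod.
Proof. by split; [exact: eqmod_refl | exact: eqmod_sym | exact: eqmod_trans]. Qed.

#[global] Instance mul_eqmod : Proper (eqmod ==> eqmod ==> eqmod) *%R.
Proof. by move=> x x' Jx y y' Jy; apply: eqmodM. Qed.

#[global] Instance scale_eqmod k : Proper (eqmod ==> eqmod) ( *:%R k).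
Proof. by move=> x x'; apply: eqmodZ. Qed.

Lemma eqmod_mull2 p x y z : eqmod (x * y) z -> eqmod (p * x * y) (p * z).
Proof. by move=> xy; rewrite -mulrA xy; reflexivity. Qed.

Lemma eqmod_mull3 p x y z w : eqmod (x * y * z) w -> eqmod (p * x * y * z) (p * w).
Proof. by move=> xyz; rewrite -(mulrA p) -(mulrA p) xyz; reflexivity. Qed.

Lemma eqmod_scale_inv k x y : k != 0 -> eqmod x (k *: y) -> eqmod y (k^-1 *: x).
Proof. by move=> k0 ->; rewrite scalerA mulVf // scale1r; reflexivity. Qed.
End Congruence.

Section Corners.
Variables (K : fieldType) (V : finType) (R : lalgType K) (P : R -> Prop) (e : V -> R).
Hypothesis R_scalerAr : forall k (x y : R), k *: (x * y) = x * (k *: y).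

Definition in_corner (u v : V) (x : R) : Prop :=
  eqmod P (e u * x) x /\ eqmod P (x * e v) x.

Lemma in_cornerM u v w x y :
  in_corner u v x -> in_corner v w y -> in_corner u w (x * y).
Proof. by move=> [ux _] [_ yw]; split; [rewrite mulrA ux | rewrite -mulrA yw]; reflexivity. Qed.

Lemma in_cornerZ u v k x : in_corner u v x -> in_corner u v (k *: x).
Proof. by move=> [ux xv]; split; rewrite -?R_scalerAr -?scalerAl ?ux ?xv; reflexivity. Qed.
End Corners.

Section WsaRelations.
Variables (K : fieldType) (V A : finType) (s t : A -> V) (f : A -> A).
Variables (m : A -> nat) (c : A -> K).

Definition apath_arrows (a : A) : seq A :=
  [seq iter i (gperm s f) a | i <- iota 0 (m a * norb s f a - 1)].

Definition wsa_rels (R : lalgType K) (P : R -> Prop) (x : A -> R) : Prop :=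
  [/\ forall a, eqmod P (x a * x (f a))
                  (c (bar s a) *: \prod_(b <- apath_arrows (bar s a)) x b),
      forall a, ~~ virtual s f m (f (f a)) ->
        eqmod P (x a * x (f a) * x (gperm s f (f a))) 0
    & forall a, ~~ virtual s f m (f a) ->
        eqmod P (x a * x (gperm s f a) * x (f (gperm s f a))) 0].

Lemma wsa_rels_arr : wsa_rels (wsa_rel s t f m c) (@arr K V A).
Proof.
split=> [a | a va | a va]; [|apply/eqmod0..]; apply: gi_gen; right.
- by left; exists a.
- by right; left; exists a.
- by right; right; exists a.
Qed.

Lemma in_corner_arr a :
  in_corner (wsa_rel s t f m c) (vtx K A) (s a) (t a) (arr K V a).
Proof.
by split; apply: gi_gen; left; right; right; [left | right]; exists a.
Qed.
End WsaRelations.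

Section FreeAlgebraMaps.
Variables (K : fieldType) (V A : finType).
Local Notation F := (FreeAlg K V A).

Definition arrow_subst (x : A -> F) : {lrmorphism F -> F} :=
  free_eval (@free_scalerAr K _)
    (fun i : V + A => if i is inr a then x a else (<< fmu i >> : F)).

Lemma arrow_subst_vtx x v : arrow_subst x (vtx K A v) = vtx K A v.
Proof. exact: free_eval_gen. Qed.

Lemma arrow_subst_arr x a : arrow_subst x (arr K V a) = x a.
Proof. exact: free_eval_gen. Qed.

Lemma lrmorph_inverse_mod (P : F -> Prop) (g h : {lrmorphism F -> F}) (y : A -> F) :
    (forall v, g (vtx K A v) = vtx K A v) -> (forall v, h (vtx K A v) = vtx K A v) ->
    (forall a, h (arr K V a) = y a) -> (forall a, eqmod P (g (y a)) (arr K V a)) ->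
  forall z, eqmod P (g (h z)) z.
Proof.
move=> g_vtx h_vtx h_arr gy; apply: free_alg_ind => [|[v|a]|z1 z2 e1 e2|k z e|z1 z2 e1 e2].
- have -> : g (h 1) = 1 by rewrite !rmorph1.
  exact: eqmod_refl.
- have -> : g (h (vtx K A v)) = vtx K A v by rewrite h_vtx g_vtx.
  exact: eqmod_refl.
- by rewrite (h_arr a); apply: gy.
- have -> : g (h (z1 + z2)) = g (h z1) + g (h z2) by rewrite !rmorphD.
  exact: eqmodD.
- have -> : g (h (k *: z)) = k *: g (h z) by rewrite !linearZ.
  exact: eqmodZ.
- have -> : g (h (z1 * z2)) = g (h z1) * g (h z2) by rewrite !rmorphM.
  exact: eqmodM.
Qed.

Variables (s t : A -> V) (f : A -> A) (m : A -> nat) (c : A -> K).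
Variables (s' t' : A -> V) (f' : A -> A) (m' : A -> nat) (c' : A -> K).
Local Notation P' := (wsa_rel s' t' f' m' c').

Lemma wsa_ideal_map (g : {lrmorphism F -> F}) (x : A -> F) :
    (forall v, g (vtx K A v) = vtx K A v) -> (forall a, g (arr K V a) = x a) ->
    (forall a, in_corner P' (vtx K A) (s a) (t a) (x a)) -> wsa_rels s f m c P' x ->
  forall y, wsa_ideal s t f m c y -> wsa_ideal s' t' f' m' c' (g y).
Proof.
move=> g_vtx g_arr x_corner [x_comm x_zero3 x_zero4] y.
(* Rewriting g inside concrete elements of the free algebra lets unification
   unfold its multiplication, which is very slow; the images of the generators
   are therefore obtained by instantiating the equations below. *)
have gM p q p' q' : g p = p' -> g q = q' -> g (p * q) = p' * q'.
  by move=> <- <-; rewrite rmorphM.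
have g_diff p q p' q' : g p = p' -> g q = q' -> eqmod P' p' q' -> gen_ideal P' (g (p - q)).
  by move=> <- <-; rewrite /eqmod rmorphB.
have g_zero p q r p' q' r' :
    g p = p' -> g q = q' -> g r = r' -> eqmod P' (p' * q' * r') 0 -> gen_ideal P' (g (p * q * r)).
  by move=> gp gq gr /eqmod0; rewrite (gM _ _ _ _ (gM _ _ _ _ gp gq) gr).
elim=> {y} [r Pr | | y z _ Jy _ Jz | z y _ Jy | y z _ Jy]; last 4 first.
- by rewrite rmorph0; apply: gi_0.
- by rewrite rmorphD; apply: gi_add.
- by rewrite rmorphM; apply: gi_mull.
- by rewrite rmorphM; apply: gi_mulr.
case: Pr => [[[u [v ->]] | [-> | [[a ->] | [a ->]]]] | [[a ->] | [[a [va ->]] | [a [va ->]]]]].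
- apply: g_diff (gM _ _ _ _ (g_vtx u) (g_vtx v)) (gM _ _ _ _ (rmorph_nat _ _) (g_vtx u)) _.
  by apply: gi_gen; left; left; exists u, v.
- apply: g_diff (rmorph1 _) _; last by apply: gi_gen; left; right; left.
  by rewrite rmorph_sum; apply: eq_bigr => v _; apply: g_vtx.
- exact: g_diff (gM _ _ _ _ (g_vtx _) (g_arr a)) (g_arr a) (x_corner a).1.
- exact: g_diff (gM _ _ _ _ (g_arr a) (g_vtx _)) (g_arr a) (x_corner a).2.
- apply: g_diff (gM _ _ _ _ (g_arr a) (g_arr (f a))) _ (x_comm a).
  by rewrite linearZ rmorph_prod; congr (_ *: _); apply: eq_bigr => b _; apply: g_arr.
- exact: g_zero (g_arr _) (g_arr _) (g_arr _) (x_zero3 a va).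
- exact: g_zero (g_arr _) (g_arr _) (g_arr _) (x_zero4 a va).
Qed.
End FreeAlgebraMaps.

Local Notation o0 := (@Ordinal 6 0 isT).
Local Notation o1 := (@Ordinal 6 1 isT).
Local Notation o2 := (@Ordinal 6 2 isT).
Local Notation o3 := (@Ordinal 6 3 isT).
Local Notation o4 := (@Ordinal 6 4 isT).
Local Notation o5 := (@Ordinal 6 5 isT).
Local Notation v0 := (@Ordinal 3 0 isT).
Local Notation v1 := (@Ordinal 3 1 isT).
Local Notation v2 := (@Ordinal 3 2 isT).

Lemma ord6_ind (Q : 'I_6 -> Prop) :
  Q o0 -> Q o1 -> Q o2 -> Q o3 -> Q o4 -> Q o5 -> forall a, Q a.
Proof.
by move=> ? ? ? ? ? ? [[|[|[|[|[|[|//]]]]]] lt_a6]; rewrite (bool_irrelevance lt_a6 isT).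
Qed.

Lemma pick_ord6 (p : pred 'I_6) : [pick a | p a] = ohead (filter p [:: o0; o1; o2; o3; o4; o5]).
Proof.
have enum6 : enum 'I_6 = [:: o0; o1; o2; o3; o4; o5].
  by apply: (inj_map val_inj); rewrite val_enum_ord.
by rewrite /pick /enum_mem -enumT enum6.
Qed.

(* The tables of Defs are built with inord, which does not compute (it goes
   through the opaque idP); these computable copies replace them. *)
Definition T_src (a : 'I_6) : 'I_3 := nth v0 [:: v0; v1; v2; v1; v2; v0] a.
Definition T_tgt (a : 'I_6) : 'I_3 := nth v0 [:: v1; v2; v0; v0; v1; v2] a.
Definition S_src (a : 'I_6) : 'I_3 := nth v0 [:: v0; v0; v1; v1; v2; v2] a.
Definition S_tgt (a : 'I_6) : 'I_3 := nth v0 [:: v0; v1; v0; v2; v1; v2] a.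
Definition f_tab (a : 'I_6) : 'I_6 := nth o0 [:: o1; o2; o0; o5; o3; o4] a.
Definition T_bar (a : 'I_6) : 'I_6 := nth o0 [:: o5; o3; o4; o1; o2; o0] a.
Definition S_bar (a : 'I_6) : 'I_6 := nth o0 [:: o1; o0; o3; o2; o5; o4] a.
Definition T_norb (a : 'I_6) : nat := 2.
Definition S_norb (a : 'I_6) : nat := nth 0 [:: 1; 4; 4; 4; 4; 1]%N a.

Lemma T_sE : T_s = T_src.
Proof. by apply: functional_extensionality; apply: ord6_ind; apply: val_inj; apply: inordK. Qed.
Lemma T_tE : T_t = T_tgt.
Proof. by apply: functional_extensionality; apply: ord6_ind; apply: val_inj; apply: inordK. Qed.
Lemma S_sE : S_s = S_src.
Proof. by apply: functional_extensionality; apply: ord6_ind; apply: val_inj; apply: inordK. Qed.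
Lemma S_tE : S_t = S_tgt.
Proof. by apply: functional_extensionality; apply: ord6_ind; apply: val_inj; apply: inordK. Qed.
Lemma T_fE : T_f = f_tab.
Proof. by apply: functional_extensionality; apply: ord6_ind; apply: val_inj; apply: inordK. Qed.
Lemma S_fE : S_f = f_tab.
Proof. exact: T_fE. Qed.

Lemma bar_T_src : bar T_src = T_bar.
Proof. by apply: functional_extensionality; apply: ord6_ind; rewrite /bar pick_ord6. Qed.
Lemma bar_S_src : bar S_src = S_bar.
Proof. by apply: functional_extensionality; apply: ord6_ind; rewrite /bar pick_ord6. Qed.

Lemma norb_T : norb T_src f_tab = T_norb.
Proof.
apply: functional_extensionality; rewrite /norb /gperm bar_T_src.
apply: ord6_ind.
- by rewrite (@order_cycle _ _ [:: o0; o3]).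
- by rewrite (@order_cycle _ _ [:: o1; o4]).
- by rewrite (@order_cycle _ _ [:: o2; o5]).
- by rewrite (@order_cycle _ _ [:: o0; o3]).
- by rewrite (@order_cycle _ _ [:: o1; o4]).
- by rewrite (@order_cycle _ _ [:: o2; o5]).
Qed.

Lemma norb_S : norb S_src f_tab = S_norb.
Proof.
apply: functional_extensionality; rewrite /norb /gperm bar_S_src.
apply: ord6_ind.
- by rewrite (@order_cycle _ _ [:: o0]).
- by rewrite (@order_cycle _ _ [:: o1; o3; o4; o2]).
- by rewrite (@order_cycle _ _ [:: o1; o3; o4; o2]).
- by rewrite (@order_cycle _ _ [:: o1; o3; o4; o2]).
- by rewrite (@order_cycle _ _ [:: o1; o3; o4; o2]).
- by rewrite (@order_cycle _ _ [:: o5]).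
Qed.

Section Substitutions.
Variables (K : fieldType) (lam : K).

Definition T_to_Sigma (R : lalgType K) (x : 'I_6 -> R) (a : 'I_6) : R :=
  nth 0 [:: x o1; lam^-1 *: x o3; x o4 * x o2; x o2; x o4; lam^-1 *: (x o1 * x o3)] a.

Definition Sigma_to_T (R : lalgType K) (x : 'I_6 -> R) (a : 'I_6) : R :=
  nth 0 [:: x o0 * x o3; x o0; x o3; lam *: x o1; x o4; lam *: (x o4 * x o1)] a.

Variables (R S : lalgType K) (g : {lrmorphism R -> S}) (x : 'I_6 -> R) (y : 'I_6 -> S).
Hypothesis gxy : forall b, g (x b) = y b.

Lemma T_to_Sigma_rmorph a : g (T_to_Sigma x a) = T_to_Sigma y a.
Proof. by move: a; apply: ord6_ind; rewrite /T_to_Sigma /= -!gxy ?(linearZ, rmorphM). Qed.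

Lemma Sigma_to_T_rmorph a : g (Sigma_to_T x a) = Sigma_to_T y a.
Proof. by move: a; apply: ord6_ind; rewrite /Sigma_to_T /= -!gxy ?(linearZ, rmorphM). Qed.
End Substitutions.

Section Relations.
Variables (K : fieldType) (R : lalgType K) (P : R -> Prop).
Local Notation "x ≡ y %[P]" := (eqmod P x y) (at level 70, y at next level).

Record T_rels (mu : K) (a1 a2 a3 b1 b2 b3 : R) : Prop := TRels {
  T_a1a2 : a1 * a2 ≡ b3 %[P];
  T_a2a3 : a2 * a3 ≡ mu *: (b1 * a1 * b1) %[P];
  T_a3a1 : a3 * a1 ≡ b2 * a2 * b2 %[P];
  T_b1b3 : b1 * b3 ≡ a2 * b2 * a2 %[P];
  T_b2b1 : b2 * b1 ≡ a3 %[P];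
  T_b3b2 : b3 * b2 ≡ mu *: (a1 * b1 * a1) %[P];
  T_a2a3b3 : a2 * a3 * b3 ≡ 0 %[P];
  T_a3a1b1 : a3 * a1 * b1 ≡ 0 %[P];
  T_b1b3a3 : b1 * b3 * a3 ≡ 0 %[P];
  T_b3b2a2 : b3 * b2 * a2 ≡ 0 %[P];
  T_a1b1b3 : a1 * b1 * b3 ≡ 0 %[P];
  T_a3b3b2 : a3 * b3 * b2 ≡ 0 %[P];
  T_b2a2a3 : b2 * a2 * a3 ≡ 0 %[P];
  T_b3a3a1 : b3 * a3 * a1 ≡ 0 %[P] }.

Record Sigma_rels (lam : K) (al be ga si de et : R) : Prop := SigmaRels {
  S_albe : al * be ≡ lam *: (be * si * de) %[P];
  S_bega : be * ga ≡ al %[P];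
  S_gaal : ga * al ≡ lam *: (si * de * ga) %[P];
  S_siet : si * et ≡ lam *: (ga * be * si) %[P];
  S_desi : de * si ≡ et %[P];
  S_etde : et * de ≡ lam *: (de * ga * be) %[P];
  S_albesi : al * be * si ≡ 0 %[P];
  S_gaalal : ga * al * al ≡ 0 %[P];
  S_sietet : si * et * et ≡ 0 %[P];
  S_etdega : et * de * ga ≡ 0 %[P];
  S_alalbe : al * al * be ≡ 0 %[P];
  S_besiet : be * si * et ≡ 0 %[P];
  S_degaal : de * ga * al ≡ 0 %[P];
  S_etetde : et * et * de ≡ 0 %[P] }.

Lemma T_relsE mu (x : 'I_6 -> R) :
  wsa_rels T_s T_f T_m (T_c mu) P x <->
  T_rels mu (x o0) (x o1) (x o2) (x o3) (x o4) (x o5).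
Proof.
rewrite /wsa_rels T_sE T_fE /virtual /apath_arrows /gperm norb_T bar_T_src.
split=> [[comm zero3 zero4] | rels].
  move: (comm o0) (comm o1) (comm o2) (comm o3) (comm o4) (comm o5).
  move: (zero3 o1 isT) (zero3 o2 isT) (zero3 o3 isT) (zero3 o5 isT).
  move: (zero4 o0 isT) (zero4 o2 isT) (zero4 o4 isT) (zero4 o5 isT).
  rewrite /= !big_cons !big_nil !mulr1 ?scale1r !mulrA.
  by move=> *; split.
by case: rels => *; split; apply: ord6_ind; rewrite /= ?big_cons ?big_nil ?mulr1 ?scale1r ?mulrA.
Qed.

Lemma Sigma_relsE lam (x : 'I_6 -> R) :
  wsa_rels S_s S_f S_m (S_c lam) P x <->
  Sigma_rels lam (x o0) (x o1) (x o2) (x o3) (x o4) (x o5).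
Proof.
rewrite /wsa_rels S_sE S_fE /virtual /apath_arrows /gperm norb_S bar_S_src.
split=> [[comm zero3 zero4] | rels].
  move: (comm o0) (comm o1) (comm o2) (comm o3) (comm o4) (comm o5).
  move: (zero3 o0 isT) (zero3 o2 isT) (zero3 o3 isT) (zero3 o5 isT).
  move: (zero4 o0 isT) (zero4 o1 isT) (zero4 o4 isT) (zero4 o5 isT).
  rewrite /= !big_cons !big_nil !mulr1 ?scale1r !mulrA.
  by move=> *; split.
by case: rels => *; split; apply: ord6_ind; rewrite /= ?big_cons ?big_nil ?mulr1 ?scale1r ?mulrA.
Qed.

Hypothesis R_scalerAr : forall k (x y : R), k *: (x * y) = x * (k *: y).
Variable lam : K.
Hypothesis lam0 : lam != 0.

Ltac scalar_nf := do ?[rewrite -scalerAl | rewrite -R_scalerAr]; rewrite ?scalerA ?mulrA.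

Lemma T_rels_of_Sigma_rels al be ga si de et :
    Sigma_rels lam al be ga si de et ->
  T_rels (lam ^- 2) be (lam^-1 *: si) (de * ga) ga de (lam^-1 *: (be * si)).
Proof.
case=> albe bega gaal siet desi etde albesi _ _ etdega alalbe besiet degaal etetde.
have sdg := eqmod_scale_inv lam0 gaal; have gbs := eqmod_scale_inv lam0 siet.
have dgb := eqmod_scale_inv lam0 etde; have bsd := eqmod_scale_inv lam0 albe.
have lam2 : lam^-1 * lam^-1 = lam ^- 2 by rewrite -expr2 exprVn.
split; scalar_nf.
- reflexivity.
- by rewrite sdg -bega; scalar_nf; rewrite lam2; reflexivity.
- by rewrite dgb -desi; scalar_nf; reflexivity.
- by rewrite gbs -[si * de * si]mulrA desi; scalar_nf; reflexivity.
- reflexivity.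
- by rewrite bsd bega; scalar_nf; rewrite lam2; reflexivity.
- by rewrite sdg; scalar_nf; rewrite (eqmod_mull3 _ albesi) !(mulr0, scaler0); reflexivity.
- by rewrite (eqmod_mull2 _ bega) degaal; reflexivity.
- by rewrite gbs; scalar_nf; rewrite (eqmod_mull3 _ etdega) !(mulr0, scaler0); reflexivity.
- by rewrite (eqmod_mull2 _ desi) besiet !(mulr0, scaler0); reflexivity.
- by rewrite bega albesi scaler0; reflexivity.
- by rewrite dgb; scalar_nf; rewrite (eqmod_mull2 _ desi) etetde !(mulr0, scaler0); reflexivity.
- by rewrite desi etdega scaler0; reflexivity.
- by rewrite bsd; scalar_nf; rewrite (eqmod_mull2 _ bega) alalbe !(mulr0, scaler0); reflexivity.
Qed.

Lemma Sigma_rels_of_T_rels a1 a2 a3 b1 b2 b3 :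
    T_rels (lam ^- 2) a1 a2 a3 b1 b2 b3 ->
  Sigma_rels lam (a1 * b1) a1 b1 (lam *: a2) b2 (lam *: (b2 * a2)).
Proof.
have mu0 : lam ^- 2 != 0 by rewrite invr_eq0 expf_neq0.
have mu_inv : (lam ^- 2)^-1 = lam * lam by rewrite invrK expr2.
case=> a1a2 a2a3 a3a1 b1b3 b2b1 b3b2 _ a3a1b1 _ b3b2a2 a1b1b3 a3b3b2 b2a2a3 b3a3a1.
have bab := eqmod_scale_inv mu0 a2a3; have aba := eqmod_scale_inv mu0 b3b2.
split; scalar_nf.
- by rewrite aba a1a2 mu_inv; reflexivity.
- reflexivity.
- by rewrite bab (eqmod_mull2 _ b2b1) mu_inv; reflexivity.
- by rewrite -b1b3 (eqmod_mull2 _ a1a2); reflexivity.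
- reflexivity.
- by rewrite -a3a1 b2b1; reflexivity.
- by rewrite (eqmod_mull2 _ a1a2) a1b1b3 scaler0; reflexivity.
- by rewrite bab; scalar_nf; rewrite (eqmod_mull3 _ a3a1b1) mulr0 scaler0; reflexivity.
- by rewrite -b1b3 (eqmod_mull3 _ b3b2a2) mulr0 scaler0; reflexivity.
- by rewrite (eqmod_mull2 _ b2b1) b2a2a3 scaler0; reflexivity.
- by rewrite aba; scalar_nf; rewrite (eqmod_mull2 _ b2b1) b3a3a1 scaler0; reflexivity.
- by rewrite a1a2 b3b2a2 scaler0; reflexivity.
- by rewrite b2b1 a3a1b1; reflexivity.
- rewrite (eqmod_mull3 _ (eqmod_sym b1b3)); scalar_nf.
  by rewrite b2b1 a3b3b2 scaler0; reflexivity.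
Qed.

Variable e : 'I_3 -> R.

Lemma T_to_Sigma_corner (x : 'I_6 -> R) :
    (forall b, in_corner P e (S_s b) (S_t b) (x b)) ->
  forall a, in_corner P e (T_s a) (T_t a) (T_to_Sigma lam x a).
Proof.
rewrite S_sE S_tE T_sE T_tE => xc; apply: ord6_ind; rewrite /T_to_Sigma /=.
- exact: xc o1.
- by apply: (in_cornerZ R_scalerAr); exact: xc o3.
- exact: in_cornerM (xc o4) (xc o2).
- exact: xc o2.
- exact: xc o4.
- by apply: (in_cornerZ R_scalerAr); exact: in_cornerM (xc o1) (xc o3).
Qed.

Lemma Sigma_to_T_corner (x : 'I_6 -> R) :
    (forall b, in_corner P e (T_s b) (T_t b) (x b)) ->
  forall a, in_corner P e (S_s a) (S_t a) (Sigma_to_T lam x a).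
Proof.
rewrite S_sE S_tE T_sE T_tE => xc; apply: ord6_ind; rewrite /Sigma_to_T /=.
- exact: in_cornerM (xc o0) (xc o3).
- exact: xc o0.
- exact: xc o3.
- by apply: (in_cornerZ R_scalerAr); exact: xc o1.
- exact: xc o4.
- by apply: (in_cornerZ R_scalerAr); exact: in_cornerM (xc o4) (xc o1).
Qed.

Lemma T_to_Sigma_to_T (x : 'I_6 -> R) :
    T_rels (lam ^- 2) (x o0) (x o1) (x o2) (x o3) (x o4) (x o5) ->
  forall a, T_to_Sigma lam (Sigma_to_T lam x) a ≡ x a %[P].
Proof.
move=> rels; apply: ord6_ind; rewrite /T_to_Sigma /Sigma_to_T /=; scalar_nf.
- reflexivity.
- by rewrite mulVf // scale1r; reflexivity.
- exact: T_b2b1 rels.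
- reflexivity.
- reflexivity.
- by rewrite mulVf // scale1r; exact: T_a1a2 rels.
Qed.

Lemma Sigma_to_T_to_Sigma (x : 'I_6 -> R) :
    Sigma_rels lam (x o0) (x o1) (x o2) (x o3) (x o4) (x o5) ->
  forall a, Sigma_to_T lam (T_to_Sigma lam x) a ≡ x a %[P].
Proof.
move=> rels; apply: ord6_ind; rewrite /T_to_Sigma /Sigma_to_T /=; scalar_nf.
- exact: S_bega rels.
- reflexivity.
- reflexivity.
- by rewrite mulfV // scale1r; reflexivity.
- reflexivity.
- by rewrite mulfV // scale1r; exact: S_desi rels.
Qed.
End Relations.

Theorem lemma3p5 (K : closedFieldType) (lam : K) :
  lam != 0 ->
  quot_alg_iso (T_ideal (lam ^-2)) (S_ideal lam).
Proof.
move=> lam0.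
have F_scalerAr : forall k (x y : FreeAlg K 'I_3 'I_6), k *: (x * y) = x * (k *: y).
  exact: free_scalerAr.
have T_arr := (T_relsE _ _ _).1 (@wsa_rels_arr _ _ _ T_s T_t T_f T_m (T_c (lam ^- 2))).
have S_arr := (Sigma_relsE _ _ _).1 (@wsa_rels_arr _ _ _ S_s S_t S_f S_m (S_c lam)).
exists (arrow_subst (T_to_Sigma lam (@arr K 'I_3 'I_6))).
exists (arrow_subst (Sigma_to_T lam (@arr K 'I_3 'I_6))).
split.
- apply: wsa_ideal_map (arrow_subst_vtx _) (arrow_subst_arr _) _ _.
    by apply: (T_to_Sigma_corner F_scalerAr); apply: in_corner_arr.
  by apply/T_relsE; apply: T_rels_of_Sigma_rels S_arr.
- apply: wsa_ideal_map (arrow_subst_vtx _) (arrow_subst_arr _) _ _.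
    by apply: (Sigma_to_T_corner F_scalerAr); apply: in_corner_arr.
  by apply/Sigma_relsE; apply: Sigma_rels_of_T_rels T_arr.
- apply: lrmorph_inverse_mod (arrow_subst_vtx _) (arrow_subst_vtx _) (arrow_subst_arr _) _ => a.
  rewrite (T_to_Sigma_rmorph _ (arrow_subst_arr _)).
  exact: T_to_Sigma_to_T T_arr a.
- apply: lrmorph_inverse_mod (arrow_subst_vtx _) (arrow_subst_vtx _) (arrow_subst_arr _) _ => a.
  rewrite (Sigma_to_T_rmorph _ (arrow_subst_arr _)).
  exact: Sigma_to_T_to_Sigma S_arr a.
Qed.
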